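(* Let $T>0$, $a\ge0$, and let $y$ be a non-negative, continuous, non-decreasing function on $[0,T)$. Let $F$ be a non-negative continuous function on $[2,+\infty)\times\mathbb{R}_+$ which is increasing with respect to its second variable. Assume that for every $0<t_0<t_1<T$ and every $p\in[2,+\infty)$, $$y(t_1)-y(t_0)\le a(t_1-t_0)+\int_{t_0}^{t_1}F(p,y(s))\,ds.$$ Let $\mu:\mathbb{R}_+\to\mathbb{R}_+$ be continuous, and assume that for every $x\ge0$ there exists $p_x\in[2,+\infty)$ such that $F(p_x,x)\le\mu(x)$. Then for all $0<t<T$, $$y(t)-y(0)\le at+\int_0^t\mu(y(s))\,ds.$$ *)

From Stdlib Require Import Reals.
From Coquelicot Require Import Coquelicot.
Open Scope R_scope.

Definition continuous_on2 (D : R * R -> Prop) (F : R -> R -> R) : Prop :=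
  forall z, D z ->
    filterlim (fun w : R * R => F (fst w) (snd w)) (within D (locally z))
      (locally (F (fst z) (snd z))).

(* Fix 0 < t0 <= t and eps > 0, and prove
     y s - y t0 <= a (s - t0) + \int_t0^s mu (y) + eps (s - t0)
   for all s in [t0, t] by real induction.  To step from s to s + h, take the
   exponent p given by the hypothesis on mu at the point y (s + h): as F p is
   increasing and y non-decreasing, the integral of F p (y) over [s, s + h] is
   at most h F p (y (s + h)) <= h mu (y (s + h)), and continuity of mu o y at s
   compares this with the integral of mu (y) up to eps h.  Limits from the left
   are handled by continuity of y and the monotonicity in s of the right-hand
   side.  Finally let eps -> 0, and t0 -> 0 using continuity of y at 0. *)

From Stdlib Require Import Reals Lra Classical.
From Coquelicot Require Import Coquelicot.
Open Scope R_scope.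

Lemma filterlim_within {T U : Type} {F : (T -> Prop) -> Prop} {FF : Filter F}
  (G : (U -> Prop) -> Prop) (E : U -> Prop) (f : T -> U) :
  filterlim f F G -> F (fun x => E (f x)) -> filterlim f F (within E G).
Proof.
  intros Hf HE P HP. unfold filtermap.
  apply (filter_imp (fun x => E (f x) /\ (E (f x) -> P (f x)))).
  - intros x [Ex HPx]. exact (HPx Ex).
  - apply filter_and; [exact HE | exact (Hf _ HP)].
Qed.

Lemma continuous_on_comp {U V W : UniformSpace} (D : U -> Prop) (E : V -> Prop)
  (f : U -> V) (g : V -> W) :
  (forall x, D x -> E (f x)) -> continuous_on D f -> continuous_on E g ->
  continuous_on D (fun x => g (f x)).
Proof.
  intros DE Hf Hg x Dx.
  apply filterlim_comp with (within E (locally (f x))); [|exact (Hg _ (DE x Dx))].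
  apply filterlim_within; [exact (Hf x Dx)|].
  unfold within; apply filter_forall. exact DE.
Qed.

Lemma continuous_on2_slice (D : R * R -> Prop) (F : R -> R -> R) (p : R) :
  continuous_on2 D F -> continuous_on (fun x => D (p, x)) (F p).
Proof.
  intros HF x Dx.
  apply (filterlim_comp _ _ _ (fun z => (p, z)) (fun w => F (fst w) (snd w))
    _ (within D (locally (p, x)))); [|exact (HF (p, x) Dx)].
  apply filterlim_within.
  - intros P [eps HP]. apply filter_le_within.
    exists eps. intros z Hz. apply HP. split; [apply ball_center | exact Hz].
  - unfold within; apply filter_forall. easy.
Qed.

Lemma Rabs_clamp_le (a b u v : R) :
  Rabs (Rmax a (Rmin b u) - Rmax a (Rmin b v)) <= Rabs (u - v).
Proof.
  unfold Rmax, Rmin; repeat destruct Rle_dec; unfold Rabs;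
    repeat destruct Rcase_abs; lra.
Qed.

Lemma continuous_clamp (a b z : R) : continuous (fun x => Rmax a (Rmin b x)) z.
Proof.
  apply filterlim_locally. intros eps. exists eps. intros w Hw.
  exact (Rle_lt_trans _ _ _ (Rabs_clamp_le a b w z) Hw).
Qed.

Lemma ex_RInt_continuous_on (D : R -> Prop) (f : R -> R) (a b : R) :
  a <= b -> (forall x, a <= x <= b -> D x) -> continuous_on D f -> ex_RInt f a b.
Proof.
  intros Hab HD Hf.
  (* [ex_RInt_continuous] needs continuity on R: compose f with a clamp to [a, b]. *)
  set (clamp := fun x => Rmax a (Rmin b x)).
  assert (clamp_id : forall x, a <= x <= b -> clamp x = x).
  { intros x Hx. unfold clamp. rewrite Rmin_right, Rmax_right; lra. }
  apply ex_RInt_ext with (fun x => f (clamp x)).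
  { rewrite Rmin_left, Rmax_right by lra. intros x Hx.
    apply f_equal, clamp_id. lra. }
  apply (@ex_RInt_continuous R_CompleteNormedModule).
  rewrite Rmin_left, Rmax_right by lra. intros z Hz.
  assert (Hclamp : continuous clamp z) by apply continuous_clamp.
  unfold continuous in Hclamp |- *. rewrite (clamp_id z Hz) in Hclamp |- *.
  apply filterlim_comp with (within D (locally z)); [|exact (Hf z (HD z Hz))].
  apply filterlim_within; [exact Hclamp|].
  apply filter_forall. intros x. apply HD. unfold clamp.
  split; [apply Rmax_l | apply Rmax_lub; [lra | apply Rmin_l]].
Qed.

Lemma continuous_on_Rabs (D : R -> Prop) (f : R -> R) (x eps : R) :
  continuous_on D f -> D x -> 0 < eps ->
  exists d, 0 < d /\ forall z, D z -> Rabs (z - x) < d -> Rabs (f z - f x) < eps.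
Proof.
  intros Hf Dx Heps.
  destruct (proj1 (filterlim_locally _ _) (Hf x Dx) (mkposreal eps Heps)) as [d Hd].
  exists d. split; [apply cond_pos|]. intros z Dz Hz. exact (Hd z Hz Dz).
Qed.

Lemma continuous_on_approx_left (D : R -> Prop) (f : R -> R) (l s eps : R) :
  continuous_on D f -> (forall u, l <= u <= s -> D u) -> l < s -> 0 < eps ->
  exists u, l <= u < s /\ Rabs (f u - f s) < eps.
Proof.
  intros Hf HD Hls Heps.
  destruct (continuous_on_Rabs D f s eps Hf (HD s ltac:(lra)) Heps) as [d [Hd Hfd]].
  assert (Hm : 0 < Rmin d (s - l)) by (apply Rmin_pos; lra).
  pose proof (Rmin_l d (s - l)). pose proof (Rmin_r d (s - l)).
  exists (s - Rmin d (s - l) / 2). split; [lra|].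
  apply Hfd; [apply HD; lra|]. rewrite Rabs_left; lra.
Qed.

Lemma continuous_on_approx_right (D : R -> Prop) (f : R -> R) (s r eps : R) :
  continuous_on D f -> (forall u, s <= u <= r -> D u) -> s < r -> 0 < eps ->
  exists u, s < u <= r /\ Rabs (f u - f s) < eps.
Proof.
  intros Hf HD Hsr Heps.
  destruct (continuous_on_Rabs D f s eps Hf (HD s ltac:(lra)) Heps) as [d [Hd Hfd]].
  assert (Hm : 0 < Rmin d (r - s)) by (apply Rmin_pos; lra).
  pose proof (Rmin_l d (r - s)). pose proof (Rmin_r d (r - s)).
  exists (s + Rmin d (r - s) / 2). split; [lra|].
  apply Hfd; [apply HD; lra|]. rewrite Rabs_right; lra.
Qed.

Lemma RInt_le_const (f : R -> R) (a b M : R) :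
  a <= b -> ex_RInt f a b -> (forall x, a < x < b -> f x <= M) ->
  RInt f a b <= (b - a) * M.
Proof.
  intros Hab Hf HM.
  replace ((b - a) * M) with (RInt (fun _ => M) a b)
    by (rewrite RInt_const; reflexivity).
  apply RInt_le; [exact Hab | exact Hf | apply ex_RInt_const | exact HM].
Qed.

Lemma RInt_ge_const (f : R -> R) (a b m : R) :
  a <= b -> ex_RInt f a b -> (forall x, a < x < b -> m <= f x) ->
  (b - a) * m <= RInt f a b.
Proof.
  intros Hab Hf Hm.
  replace ((b - a) * m) with (RInt (fun _ => m) a b)
    by (rewrite RInt_const; reflexivity).
  apply RInt_le; [exact Hab | apply ex_RInt_const | exact Hf | exact Hm].
Qed.

Lemma real_induction (P : R -> Prop) (a b : R) :
  a <= b -> P a ->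
  (forall s, a < s <= b -> (forall u, a <= u < s -> P u) -> P s) ->
  (forall s, a <= s < b -> P s ->
     exists d, 0 < d /\ forall h, 0 < h < d -> s + h <= b -> P (s + h)) ->
  P b.
Proof.
  intros Hab Pa Hclosed Hstep.
  set (E := fun u => a <= u <= b /\ forall v, a <= v <= u -> P v).
  assert (Ea : E a).
  { split; [lra|]. intros v Hv. replace v with a by lra. exact Pa. }
  destruct (completeness E) as [S [HS_ub HS_lub]].
  { exists b. intros u [Hu _]. lra. }
  { exists a. exact Ea. }
  assert (HaS : a <= S) by exact (HS_ub a Ea).
  assert (HSb : S <= b) by (apply HS_lub; intros u [Hu _]; lra).
  assert (below_S : forall v, a <= v < S -> P v).
  { intros v Hv. apply NNPP. intros nPv.
    enough (S <= v) by lra.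
    apply HS_lub. intros u [Hu Pu].
    destruct (Rle_lt_dec u v) as [Huv | Hvu]; [exact Huv|].
    exfalso. apply nPv, Pu. lra. }
  assert (ES : E S).
  { split; [lra|]. intros v Hv.
    destruct (Rlt_le_dec v S) as [HvS | HSv]; [apply below_S; lra|].
    replace v with S by lra.
    destruct (Rle_lt_dec S a) as [HSa | HaS'].
    - replace S with a by lra. exact Pa.
    - apply Hclosed; [lra | exact below_S]. }
  destruct (Rle_lt_dec b S) as [HbS | HSb'].
  - apply (proj2 ES). lra.
  - destruct (Hstep S ltac:(lra) (proj2 ES S ltac:(lra))) as [d [Hd Hd_step]].
    set (h := Rmin d (b - S) / 2).
    assert (Hm : 0 < Rmin d (b - S)) by (apply Rmin_pos; lra).
    pose proof (Rmin_l d (b - S)). pose proof (Rmin_r d (b - S)).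
    enough (ESh : E (S + h)) by (pose proof (HS_ub _ ESh); unfold h in *; lra).
    split; [unfold h; lra|]. intros v Hv.
    destruct (Rle_lt_dec v S) as [HvS | HSv].
    + apply (proj2 ES). lra.
    + replace v with (S + (v - S)) by ring.
      apply Hd_step; unfold h in *; lra.
Qed.

Section IncrementComparison.

Context {T a : R} {y : R -> R} {F : R -> R -> R} {mu : R -> R}.
Hypothesis ha : 0 <= a.
Hypothesis hy_nonneg : forall t, 0 <= t < T -> 0 <= y t.
Hypothesis hy_cont : continuous_on (fun t => 0 <= t < T) y.
Hypothesis hy_mono : forall s t, 0 <= s -> s <= t -> t < T -> y s <= y t.
Hypothesis hF_cont : continuous_on2 (fun z => 2 <= fst z /\ 0 <= snd z) F.
Hypothesis hF_mono : forall p x x', 2 <= p -> 0 <= x -> x <= x' -> F p x <= F p x'.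
Hypothesis hineq : forall t0 t1 p, 0 < t0 -> t0 < t1 -> t1 < T -> 2 <= p ->
  y t1 - y t0 <= a * (t1 - t0) + RInt (fun s => F p (y s)) t0 t1.
Hypothesis hmu_nonneg : forall x, 0 <= x -> 0 <= mu x.
Hypothesis hmu_cont : continuous_on (fun x => 0 <= x) mu.
Hypothesis hmu_bound : forall x, 0 <= x -> exists px, 2 <= px /\ F px x <= mu x.

Lemma continuous_on_mu_y : continuous_on (fun t => 0 <= t < T) (fun s => mu (y s)).
Proof. exact (continuous_on_comp _ _ y mu hy_nonneg hy_cont hmu_cont). Qed.

Lemma ex_RInt_mu_y (u v : R) :
  0 <= u <= v -> v < T -> ex_RInt (fun s => mu (y s)) u v.
Proof.
  intros Huv HvT.
  apply (ex_RInt_continuous_on (fun t => 0 <= t < T)); [lra | intros; lra |].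
  exact continuous_on_mu_y.
Qed.

Lemma ex_RInt_F_y (p u v : R) :
  2 <= p -> 0 <= u <= v -> v < T -> ex_RInt (fun s => F p (y s)) u v.
Proof.
  intros Hp Huv HvT.
  apply (ex_RInt_continuous_on (fun t => 0 <= t < T)); [lra | intros; lra |].
  apply (continuous_on_comp _ (fun x => 0 <= x)); [exact hy_nonneg | exact hy_cont |].
  apply continuous_on_subset with (fun x => 2 <= fst (p, x) /\ 0 <= snd (p, x)).
  - intros x Hx. simpl. lra.
  - exact (continuous_on2_slice _ F p hF_cont).
Qed.

Lemma RInt_mu_y_Chasles (u v w : R) :
  0 <= u <= v -> v <= w -> w < T ->
  RInt (fun s => mu (y s)) u v + RInt (fun s => mu (y s)) v w
  = RInt (fun s => mu (y s)) u w.
Proof.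
  intros Huv Hvw HwT.
  exact (RInt_Chasles _ u v w (ex_RInt_mu_y u v Huv ltac:(lra))
    (ex_RInt_mu_y v w ltac:(lra) HwT)).
Qed.

Lemma RInt_mu_y_ge_0 (u v : R) :
  0 <= u <= v -> v < T -> 0 <= RInt (fun s => mu (y s)) u v.
Proof.
  intros Huv HvT.
  apply RInt_ge_0; [lra | apply ex_RInt_mu_y; lra |].
  intros x Hx. apply hmu_nonneg, hy_nonneg. lra.
Qed.

Lemma increment_le_mu (s s' : R) :
  0 < s < s' -> s' < T -> y s' - y s <= (s' - s) * (a + mu (y s')).
Proof.
  intros Hss' Hs'T.
  destruct (hmu_bound (y s') (hy_nonneg s' ltac:(lra))) as [p [Hp HFp]].
  assert (HF_le : RInt (fun u => F p (y u)) s s' <= (s' - s) * F p (y s')).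
  { apply RInt_le_const; [lra | apply ex_RInt_F_y; lra |].
    intros x Hx. apply hF_mono; [exact Hp | apply hy_nonneg; lra | apply hy_mono; lra]. }
  assert (HF_mu : (s' - s) * F p (y s') <= (s' - s) * mu (y s'))
    by (apply Rmult_le_compat_l; lra).
  pose proof (hineq s s' p ltac:(lra) ltac:(lra) Hs'T Hp).
  lra.
Qed.

Lemma increment_le_RInt_local (s eps : R) :
  0 < s < T -> 0 < eps ->
  exists d, 0 < d /\ forall h, 0 < h < d -> s + h < T ->
    y (s + h) - y s <= a * h + RInt (fun u => mu (y u)) s (s + h) + eps * h.
Proof.
  intros Hs Heps.
  destruct (continuous_on_Rabs _ _ s (eps / 2) continuous_on_mu_y ltac:(lra) ltac:(lra))
    as [d [Hd Hosc]].
  exists d. split; [exact Hd|]. intros h Hh HhT.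
  assert (Hnear : forall x, s <= x <= s + h -> Rabs (mu (y x) - mu (y s)) < eps / 2).
  { intros x Hx. apply Hosc; [lra|]. rewrite Rabs_right; lra. }
  assert (Hlow : h * (mu (y (s + h)) - eps) <= RInt (fun u => mu (y u)) s (s + h)).
  { replace h with (s + h - s) at 1 by ring.
    apply RInt_ge_const; [lra | apply ex_RInt_mu_y; lra |].
    intros x Hx.
    pose proof (Rabs_def2 _ _ (Hnear x ltac:(lra))).
    pose proof (Rabs_def2 _ _ (Hnear (s + h) ltac:(lra))).
    lra. }
  pose proof (increment_le_mu s (s + h) ltac:(lra) HhT) as Hinc.
  replace (s + h - s) with h in Hinc by ring.
  lra.
Qed.

Lemma increment_le_RInt_eps (t0 t eps : R) :
  0 < t0 <= t -> t < T -> 0 < eps ->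
  y t - y t0 <= a * (t - t0) + RInt (fun s => mu (y s)) t0 t + eps * (t - t0).
Proof.
  intros Ht0 HtT Heps.
  apply (real_induction (fun s =>
    y s - y t0 <= a * (s - t0) + RInt (fun u => mu (y u)) t0 s + eps * (s - t0)) t0 t).
  - lra.
  - rewrite RInt_point. unfold zero; simpl. lra.
  - intros s Hs Hbelow. apply Rle_plus_epsilon. intros eta Heta.
    destruct (continuous_on_approx_left _ y t0 s eta hy_cont ltac:(intros; lra)
      ltac:(lra) Heta) as [u [Hu Hyu]].
    pose proof (Rabs_def2 _ _ Hyu).
    pose proof (Hbelow u Hu).
    pose proof (RInt_mu_y_Chasles t0 u s ltac:(lra) ltac:(lra) ltac:(lra)).
    pose proof (RInt_mu_y_ge_0 u s ltac:(lra) ltac:(lra)).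
    assert (a * (u - t0) <= a * (s - t0)) by (apply Rmult_le_compat_l; lra).
    assert (eps * (u - t0) <= eps * (s - t0)) by (apply Rmult_le_compat_l; lra).
    lra.
  - intros s Hs Ps.
    destruct (increment_le_RInt_local s eps ltac:(lra) Heps) as [d [Hd Hstep]].
    exists d. split; [exact Hd|]. intros h Hh Hhb.
    pose proof (Hstep h Hh ltac:(lra)).
    rewrite <- (RInt_mu_y_Chasles t0 s (s + h)) by lra.
    lra.
Qed.

Lemma increment_le_RInt (t0 t : R) :
  0 < t0 <= t -> t < T ->
  y t - y t0 <= a * (t - t0) + RInt (fun s => mu (y s)) t0 t.
Proof.
  intros Ht0 HtT. apply Rle_plus_epsilon. intros e He.
  assert (Het : 0 < e / t) by (apply Rdiv_lt_0_compat; lra).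
  pose proof (increment_le_RInt_eps t0 t (e / t) Ht0 HtT Het).
  assert (e / t * (t - t0) <= e / t * t) by (apply Rmult_le_compat_l; lra).
  replace (e / t * t) with e in * by (field; lra).
  lra.
Qed.

End IncrementComparison.

Theorem lemma10p1
  (T a : R) (y : R -> R) (F : R -> R -> R) (mu : R -> R)
  (hT : 0 < T) (ha : 0 <= a)
  (hy_nonneg : forall t, 0 <= t < T -> 0 <= y t)
  (hy_cont : continuous_on (fun t => 0 <= t < T) y)
  (hy_mono : forall s t, 0 <= s -> s <= t -> t < T -> y s <= y t)
  (hF_nonneg : forall p x, 2 <= p -> 0 <= x -> 0 <= F p x)
  (hF_cont : continuous_on2 (fun z => 2 <= fst z /\ 0 <= snd z) F)
  (hF_mono : forall p x x', 2 <= p -> 0 <= x -> x <= x' -> F p x <= F p x')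
  (hineq : forall t0 t1 p, 0 < t0 -> t0 < t1 -> t1 < T -> 2 <= p ->
     y t1 - y t0 <= a * (t1 - t0) + RInt (fun s => F p (y s)) t0 t1)
  (hmu_nonneg : forall x, 0 <= x -> 0 <= mu x)
  (hmu_cont : continuous_on (fun x => 0 <= x) mu)
  (hmu_bound : forall x, 0 <= x -> exists px, 2 <= px /\ F px x <= mu x) :
  forall t, 0 < t < T -> y t - y 0 <= a * t + RInt (fun s => mu (y s)) 0 t.
Proof.
  intros t Ht. apply Rle_plus_epsilon. intros e He.
  destruct (continuous_on_approx_right _ y 0 t e hy_cont ltac:(intros; lra)
    ltac:(lra) He) as [t0 [Ht0 Hy0]].
  pose proof (Rabs_def2 _ _ Hy0).
  pose proof (increment_le_RInt ha hy_nonneg hy_cont hy_mono hF_cont hF_mono hineq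
    hmu_nonneg hmu_cont hmu_bound t0 t ltac:(lra) ltac:(lra)).
  pose proof (RInt_mu_y_Chasles hy_nonneg hy_cont hmu_cont 0 t0 t
    ltac:(lra) ltac:(lra) ltac:(lra)).
  pose proof (RInt_mu_y_ge_0 hy_nonneg hy_cont hmu_nonneg hmu_cont 0 t0
    ltac:(lra) ltac:(lra)).
  pose proof (Rmult_le_pos a t0 ha ltac:(lra)).
  lra.
Qed.
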